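(* Let $N>2$ be an integer, $K,L\in\mathbb{N}$ and $\sigma\in\Omega$. If $u\in\Psi^{K\times L}_{\mathrm{ver}}(\sigma)$ and $v\in\Psi^{K\times L}_{\mathrm{hor}}(\sigma)$ then $\|u-v\|_1\neq1$ (i.e. $u,v$ are not nearest neighbours in $\mathbb{Z}^2$).
   Context: Tiles: $T_{(x,y)}=[x-1,x+1]\times[y-1,y+1]$; $\Omega=\{\sigma\in\{0,1\}^{\mathbb{Z}^2}: \sigma(u)=\sigma(v)=1,u\ne v\Rightarrow\mathrm{int}(T_u)\cap\mathrm{int}(T_v)=\emptyset\}$; parity of the tile centered at $(x,y)$ is $(x-1\bmod2,y-1\bmod2)$. Faces are unit squares with integer corners. A stick edge is an edge of the nearest-neighbour lattice $\mathbb{Z}^2$ separating two faces contained in two tiles of distinct parities; a stick is a maximal path of stick edges (a vertical or horizontal segment). A stick has type $(\mathrm{ver},i)$ if it is vertical and lies on a line $x=x_1$ with $x_1\equiv i\pmod 2$, and type $(\mathrm{hor},i)$ if horizontal on a line $y=y_1$, $y_1\equiv i\pmod 2$. $R_{K\times L,(x,y)}=[x,x+K]\times[y,y+L]$. A vertical segment from $(x_1,y_1)$ to $(x_1,y_2)$, $y_1<y_2$, divides $R_{K\times L,(x,y)}$ if $y_1\le y$, $y+L\le y_2$, $x<x_1<x+K$; horizontal analogously. For a rectangle $R$ with dimensions divisible by $N$, $R^-$ is the rectangle with the same center and dimensions $\frac{N-2}{N}(\mathrm{Width}R,\mathrm{Height}R)$; a stick divides $R$ properly if it divides both $R$ and $R^-$.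 For $\pi$ a type, $\Psi^{K\times L}_\pi(\sigma)=\{(x,y)\in\mathbb{Z}^2: R_{KN\times LN,(xK,yL)}\text{ is properly divided by a stick of type }\pi\}$; $\Psi^{K\times L}_{\mathrm{ver}}=\Psi^{K\times L}_{(\mathrm{ver},0)}\cup\Psi^{K\times L}_{(\mathrm{ver},1)}$, $\Psi^{K\times L}_{\mathrm{hor}}=\Psi^{K\times L}_{(\mathrm{hor},0)}\cup\Psi^{K\times L}_{(\mathrm{hor},1)}$. *)

From Stdlib Require Import ZArith Reals Lra Lia.
Open Scope Z_scope.

Definition config := Z * Z -> bool.

Definition in_int_tile (u : Z * Z) (p q : R) : Prop :=
  (IZR (fst u) - 1 < p < IZR (fst u) + 1)%R /\
  (IZR (snd u) - 1 < q < IZR (snd u) + 1)%R.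

Definition Omega (sigma : config) : Prop :=
  forall u v : Z * Z, sigma u = true -> sigma v = true -> u <> v ->
    forall p q : R, ~ (in_int_tile u p q /\ in_int_tile v p q).

Definition parity (u : Z * Z) : Z * Z :=
  (Z.modulo (fst u - 1) 2, Z.modulo (snd u - 1) 2).

(* The face with lower-left corner (a,b) is [a,a+1] x [b,b+1]; it is contained
   in T_(x,y) iff [a,a+1] c [x-1,x+1] and [b,b+1] c [y-1,y+1]. *)
Definition face_in_tile (f u : Z * Z) : Prop :=
  fst u - 1 <= fst f /\ fst f + 1 <= fst u + 1 /\
  snd u - 1 <= snd f /\ snd f + 1 <= snd u + 1.

Definition distinct_parity_faces (sigma : config) (f1 f2 : Z * Z) : Prop :=
  exists u1 u2 : Z * Z, sigma u1 = true /\ sigma u2 = true /\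
    face_in_tile f1 u1 /\ face_in_tile f2 u2 /\ parity u1 <> parity u2.

(* vertical edge from (a,b) to (a,b+1): separates faces (a-1,b) and (a,b) *)
Definition vstick_edge (sigma : config) (a b : Z) : Prop :=
  distinct_parity_faces sigma (a - 1, b) (a, b).

(* horizontal edge from (a,b) to (a+1,b): separates faces (a,b-1) and (a,b) *)
Definition hstick_edge (sigma : config) (a b : Z) : Prop :=
  distinct_parity_faces sigma (a, b - 1) (a, b).

(* A stick on a line, described by the set S of indices of its unit edges
   along the line: nonempty, an interval, consisting of stick edges, and
   maximal (cannot be extended at either end).  S may be unbounded. *)
Definition is_run (E : Z -> Prop) (S : Z -> Prop) : Prop :=
  (exists b, S b) /\
  (forall b1 b2 b, S b1 -> S b2 -> b1 <= b <= b2 -> S b) /\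
  (forall b, S b -> E b) /\
  (forall b, S b -> E (b + 1) -> S (b + 1)) /\
  (forall b, S b -> E (b - 1) -> S (b - 1)).

Definition vstick (sigma : config) (x1 : Z) (S : Z -> Prop) : Prop :=
  is_run (vstick_edge sigma x1) S.
Definition hstick (sigma : config) (y1 : Z) (S : Z -> Prop) : Prop :=
  is_run (fun a => hstick_edge sigma a y1) S.

(* A rectangle [x,x+W] x [y,y+H] *)
Record rect := Rect { rx : Z; ry : Z; rW : Z; rH : Z }.

Definition R_rect (K L x y : Z) : rect := Rect x y K L.

(* R^-: same centre, dimensions (N-2)/N (W,H) (for N | W, N | H). *)
Definition Rminus (N : Z) (R : rect) : rect :=
  Rect (rx R + rW R / N) (ry R + rH R / N)
       (rW R - 2 * (rW R / N)) (rH R - 2 * (rH R / N)).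

(* The vertical segment with edge set S on x = x1 runs from y1 = inf S to
   y2 = sup S + 1; it divides R iff y1 <= ry, ry + H <= y2, rx < x1 < rx + W. *)
Definition vdivides (x1 : Z) (S : Z -> Prop) (R : rect) : Prop :=
  (exists b, S b /\ b <= ry R) /\ (exists b, S b /\ ry R + rH R <= b + 1) /\
  rx R < x1 < rx R + rW R.
Definition hdivides (y1 : Z) (S : Z -> Prop) (R : rect) : Prop :=
  (exists a, S a /\ a <= rx R) /\ (exists a, S a /\ rx R + rW R <= a + 1) /\
  ry R < y1 < ry R + rH R.

Definition vdivides_properly N x1 S R := vdivides x1 S R /\ vdivides x1 S (Rminus N R).
Definition hdivides_properly N y1 S R := hdivides y1 S R /\ hdivides y1 S (Rminus N R).

Inductive orient := ver | hor.

Definition Psi_type (N K L : Z) (o : orient) (i : Z) (sigma : config) (w : Z * Z) : Prop :=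
  let R := R_rect (K * N) (L * N) (fst w * K) (snd w * L) in
  match o with
  | ver => exists x1 S, vstick sigma x1 S /\ Z.modulo x1 2 = i /\ vdivides_properly N x1 S R
  | hor => exists y1 S, hstick sigma y1 S /\ Z.modulo y1 2 = i /\ hdivides_properly N y1 S R
  end.

Definition Psi (N K L : Z) (o : orient) (sigma : config) (w : Z * Z) : Prop :=
  Psi_type N K L o 0 sigma w \/ Psi_type N K L o 1 sigma w.

From Pilot Require Import Defs.
From Stdlib Require Import ZArith Reals Lra Lia.
Open Scope Z_scope.

(* In each coordinate, the projection of R_u^- lies inside the projection of
   R_w for every w within distance one of u.  Hence the vertical
   stick dividing R_u properly meets the line of the horizontal stick dividing
   R_v properly inside that stick, and vice versa: the two sticks cross at a
   lattice point (a,b), the edges going up and going right from it both being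
   stick edges.  This is impossible: the tile covering the face north-east of
   (a,b) must be centred at (a+1,b+1), and then the parity conditions force
   the tiles covering the north-west and south-east faces to be centred at
   (a-1,b) and (a,b-1), which overlap on the south-west face. *)

Lemma parity_add2_fst (x y : Z) : parity (x + 2, y) = parity (x, y).
Proof.
  unfold parity; simpl; f_equal.
  replace (x + 2 - 1) with (x - 1 + 1 * 2) by lia.
  apply Z_mod_plus_full.
Qed.

Lemma parity_add2_snd (x y : Z) : parity (x, y + 2) = parity (x, y).
Proof.
  unfold parity; simpl; f_equal.
  replace (y + 2 - 1) with (y - 1 + 1 * 2) by lia.
  apply Z_mod_plus_full.
Qed.

Section Tiling.

Variable sigma : config.
Hypothesis sigma_Omega : Omega sigma.

Lemma occupied_tile_unique (f t t' : Z * Z) :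
  sigma t = true -> sigma t' = true ->
  face_in_tile f t -> face_in_tile f t' -> t = t'.
Proof.
  intros Ht Ht' Ft Ft'.
  assert (Hdec : {t = t'} + {t <> t'}) by (decide equality; apply Z.eq_dec).
  destruct Hdec as [|Hneq]; [assumption|exfalso].
  (* the centre of the face lies in the interiors of both tiles *)
  apply (sigma_Omega t t' Ht Ht' Hneq (IZR (fst f) + /2)%R (IZR (snd f) + /2)%R).
  destruct f as [a b], t as [x y], t' as [x' y'].
  unfold face_in_tile, in_int_tile in *; simpl in *.
  destruct Ft as (A1 & A2 & A3 & A4), Ft' as (B1 & B2 & B3 & B4).
  apply IZR_le in A1, A2, A3, A4, B1, B2, B3, B4.
  rewrite ?minus_IZR, ?plus_IZR in *.
  repeat split; lra.
Qed.

Lemma stick_edges_do_not_cross (a b : Z) :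
  vstick_edge sigma a b -> hstick_edge sigma a b -> False.
Proof.
  intros (tW & tNE & HW & HNE & FW & FNE & PW)
         (tS & tNE' & HS & HNE' & FS & FNE' & PS).
  assert (tNE' = tNE) as -> by exact (occupied_tile_unique _ _ _ HNE' HNE FNE' FNE).
  destruct tW as [xW yW], tNE as [x y], tS as [xS yS].
  unfold face_in_tile in *; simpl in *.
  assert (x = a + 1) as ->.
  { destruct (Z.eq_dec x a) as [->|]; [|lia].
    exfalso; apply PW, (f_equal parity).
    apply (occupied_tile_unique (a - 1, b)); auto; red; simpl; lia. }
  assert (y = b + 1) as ->.
  { destruct (Z.eq_dec y b) as [->|]; [|lia].
    exfalso; apply PS, (f_equal parity).
    apply (occupied_tile_unique (a, b - 1)); auto; red; simpl; lia. }
  assert (xW = a - 1) as ->.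
  { destruct (Z.eq_dec xW a) as [->|]; [|lia].
    assert (Heq : (a, yW) = (a + 1, b + 1))
      by (apply (occupied_tile_unique (a, b)); auto; red; simpl; lia).
    injection Heq; lia. }
  assert (yS = b - 1) as ->.
  { destruct (Z.eq_dec yS b) as [->|]; [|lia].
    assert (Heq : (xS, b) = (a + 1, b + 1))
      by (apply (occupied_tile_unique (a, b)); auto; red; simpl; lia).
    injection Heq; lia. }
  assert (yW = b) as ->.
  { destruct (Z.eq_dec yW (b + 1)) as [->|]; [|lia].
    exfalso; apply PW. replace (a + 1) with (a - 1 + 2) by lia.
    symmetry; apply parity_add2_fst. }
  assert (xS = a) as ->.
  { destruct (Z.eq_dec xS (a + 1)) as [->|]; [|lia].
    exfalso; apply PS. replace (b + 1) with (b - 1 + 2) by lia.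
    symmetry; apply parity_add2_snd. }
  assert (Heq : (a - 1, b) = (a, b - 1))
    by (apply (occupied_tile_unique (a - 1, b - 1)); auto; red; simpl; lia).
  injection Heq; lia.
Qed.

End Tiling.

Lemma Rminus_R_rect (N K L x y : Z) : N <> 0 ->
  Defs.Rminus N (R_rect (K * N) (L * N) x y) =
  R_rect (K * N - 2 * K) (L * N - 2 * L) (x + K) (y + L).
Proof.
  intros HN; unfold Defs.Rminus, R_rect; simpl.
  rewrite !Z.div_mul by exact HN; reflexivity.
Qed.

Lemma vdivides_run_covers (E S : Z -> Prop) (x1 : Z) (R : rect) :
  is_run E S -> vdivides x1 S R -> forall b, ry R <= b < ry R + rH R -> S b.
Proof.
  intros (_ & S_interval & _) ((blo & Sblo & Hblo) & (bhi & Sbhi & Hbhi) & _) b Hb.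
  apply (S_interval blo bhi); auto; lia.
Qed.

Lemma vdivides_properly_R_rect (N K L x y x1 : Z) (E S : Z -> Prop) :
  N <> 0 -> is_run E S ->
  vdivides_properly N x1 S (R_rect (K * N) (L * N) x y) ->
  x + K < x1 < x + K * N - K /\ (forall b, y <= b < y + L * N -> S b).
Proof.
  intros HN HS (Hdiv & Hdiv_minus); split.
  - rewrite Rminus_R_rect in Hdiv_minus by exact HN.
    destruct Hdiv_minus as (_ & _ & Hx1); cbn [R_rect rx rW] in Hx1; lia.
  - exact (vdivides_run_covers E S x1 _ HS Hdiv).
Qed.

Lemma inner_window_in_neighbour_window (p q K N z : Z) :
  0 <= K -> Z.abs (p - q) <= 1 ->
  p * K + K < z < p * K + K * N - K -> q * K <= z < q * K + K * N.
Proof.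
  intros HK Hpq Hz.
  assert (p = q - 1 \/ p = q \/ p = q + 1) as [-> | [-> | ->]] by lia; lia.
Qed.

Lemma Psi_ver_stick (N K L : Z) (sigma : config) (w : Z * Z) :
  Psi N K L ver sigma w ->
  exists x1 S, vstick sigma x1 S /\
    vdivides_properly N x1 S (R_rect (K * N) (L * N) (fst w * K) (snd w * L)).
Proof. intros [(x1 & S & ? & _ & ?)|(x1 & S & ? & _ & ?)]; eauto. Qed.

Lemma Psi_hor_stick (N K L : Z) (sigma : config) (w : Z * Z) :
  Psi N K L hor sigma w ->
  exists y1 T, hstick sigma y1 T /\
    hdivides_properly N y1 T (R_rect (K * N) (L * N) (fst w * K) (snd w * L)).
Proof. intros [(y1 & T & ? & _ & ?)|(y1 & T & ? & _ & ?)]; eauto. Qed.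

Theorem lemma5p1 (N K L : Z) (sigma : config) (u v : Z * Z) :
  2 < N -> 0 <= K -> 0 <= L -> Omega sigma ->
  Psi N K L ver sigma u -> Psi N K L hor sigma v ->
  Z.abs (fst u - fst v) + Z.abs (snd u - snd v) <> 1.
Proof.
  intros HN HK HL HO Hu Hv Hadj.
  destruct (Psi_ver_stick _ _ _ _ _ Hu) as (x1 & S & HS & HSdiv).
  destruct (Psi_hor_stick _ _ _ _ _ Hv) as (y1 & T & HT & HTdiv).
  destruct (vdivides_properly_R_rect N K L (fst u * K) (snd u * L) x1 _ S ltac:(lia) HS HSdiv)
    as (Hx1 & S_covers).
  (* a horizontal division is a vertical division of the transposed rectangle *)
  destruct (vdivides_properly_R_rect N L K (snd v * L) (fst v * K) y1 _ T ltac:(lia) HT HTdiv)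
    as (Hy1 & T_covers).
  apply (stick_edges_do_not_cross sigma HO x1 y1).
  - apply HS, S_covers.
    apply (inner_window_in_neighbour_window (snd v)); lia.
  - apply HT, T_covers.
    apply (inner_window_in_neighbour_window (fst u)); lia.
Qed.
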